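(* In the setting described in the context, let $$X=W^{1/2}R^T\big(RWR^TL_{e,s}^\tau RWR^T\big)^{-1}RW^{1/2},\qquad Y=W^{1/2}R^T\big(RWR^T\big)^{-1}RW^{1/2}.$$ Then $\lambda_{\max}(X+Y)=\lambda_{\max}(X)+\lambda_{\max}(Y)$.
   Context: Let $\mathcal G$ be an undirected, connected graph without self-loops, with node set $\{1,\dots,n\}$ ($n\ge2$) and edge set $\mathcal E$, $m=|\mathcal E|$. Give each edge an arbitrary orientation; the incidence matrix $D\in\mathbb R^{n\times m}$ has $D_{il}=1$ if node $i$ is the initial node of edge $l$, $-1$ if it is the terminal node, and $0$ otherwise. Fix a spanning tree $\mathcal G_\tau$ and order the edges so the first $n-1$ are tree edges; write $D=[D_\tau\ D_c]$ with $D_\tau\in\mathbb R^{n\times(n-1)}$. Set $T_\tau^c=(D_\tau^TD_\tau)^{-1}D_\tau^TD_c$ and $R=[I_{n-1}\ T_\tau^c]\in\mathbb R^{(n-1)\times m}$. Let $W=\mathrm{diag}(w_1,\dots,w_m)$, $w_l>0$, and $E=\mathrm{diag}(\epsilon_1,\dots,\epsilon_n)$, $\epsilon_i>0$; $W^{1/2}$ is taken entrywise. Define $L_{e,s}^\tau=D_\tau^TE^{-1}D_\tau$. $\lambda_{\max}$ denotes the largest eigenvalue of a symmetric matrix. *)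

From HB Require Import structures.
From mathcomp Require Import all_boot all_order all_algebra.
From mathcomp Require Import boolp classical_sets reals.
Set Implicit Arguments. Unset Strict Implicit. Unset Printing Implicit Defensive.
Import Order.TTheory GRing.Theory Num.Theory.
Local Open Scope ring_scope.

(* Graph data: nodes 'I_(k.+1) (n = k+1), edges 'I_(k + c) (m = k + c);
   edge l is oriented from [src l] (initial node) to [dst l] (terminal node).
   The first k = n-1 edges (lshift c l, l : 'I_k) are the spanning tree edges. *)

Definition no_self_loops n m (src dst : 'I_m -> 'I_n) : Prop :=
  forall l, src l != dst l.

Definition no_parallel_edges n m (src dst : 'I_m -> 'I_n) : Prop :=
  forall l l', l != l' ->
    ~~ (((src l == src l') && (dst l == dst l')) ||
        ((src l == dst l') && (dst l == src l'))).

Definition tree_adj k c (src dst : 'I_(k + c) -> 'I_k.+1) : rel 'I_k.+1 :=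
  fun i j => [exists l : 'I_k,
     ((src (lshift c l) == i) && (dst (lshift c l) == j)) ||
     ((src (lshift c l) == j) && (dst (lshift c l) == i))].

(* the first k = n-1 edges form a spanning tree: they connect all n nodes
   (a connected graph on n nodes with n-1 edges is a tree) *)
Definition first_edges_spanning_tree k c (src dst : 'I_(k + c) -> 'I_k.+1) : Prop :=
  forall i j : 'I_k.+1, connect (tree_adj src dst) i j.

Definition incidence (R : nzRingType) n m (src dst : 'I_m -> 'I_n) : 'M[R]_(n, m) :=
  \matrix_(i, l) ((i == src l)%:R - (i == dst l)%:R).

Section Mats.
Variable R : realType.
Variables k c : nat.
Variables (src dst : 'I_(k + c) -> 'I_k.+1).

Definition Dmat : 'M[R]_(k.+1, k + c) := incidence R src dst.
Definition Dtau : 'M[R]_(k.+1, k) := lsubmx Dmat.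
Definition Dc : 'M[R]_(k.+1, c) := rsubmx Dmat.
Definition Ttauc : 'M[R]_(k, c) :=
  invmx (Dtau^T *m Dtau) *m Dtau^T *m Dc.
Definition Rmat : 'M[R]_(k, k + c) := row_mx 1%:M Ttauc.

Definition Les (eps : 'rV[R]_k.+1) : 'M[R]_k :=
  Dtau^T *m invmx (diag_mx eps) *m Dtau.

Definition Whalf (w : 'rV[R]_(k + c)) : 'M[R]_(k + c) :=
  diag_mx (map_mx Num.sqrt w).

Definition Xmat (w : 'rV[R]_(k + c)) (eps : 'rV[R]_k.+1) : 'M[R]_(k + c) :=
  let W := diag_mx w in
  let M := Rmat *m W *m Rmat^T in
  Whalf w *m Rmat^T *m invmx (M *m Les eps *m M) *m Rmat *m Whalf w.

Definition Ymat (w : 'rV[R]_(k + c)) : 'M[R]_(k + c) :=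
  let W := diag_mx w in
  Whalf w *m Rmat^T *m invmx (Rmat *m W *m Rmat^T) *m Rmat *m Whalf w.
End Mats.

(* largest eigenvalue: the supremum of the (finite, nonempty for symmetric
   real matrices) set of real eigenvalues *)
Definition lambda_max (R : realType) p (A : 'M[R]_p) : R :=
  sup [set a : R | eigenvalue A a].

From HB Require Import structures.
From mathcomp Require Import all_boot all_order all_algebra.
From mathcomp Require Import boolp classical_sets reals.
From mathcomp Require Import complex polyrcf.
Set Implicit Arguments. Unset Strict Implicit. Unset Printing Implicit Defensive.
Import Order.TTheory GRing.Theory Num.Theory.
Local Open Scope ring_scope.

(* Put C := R W^{1/2}; it has full row rank because R = [I T^c_tau].  Then
   Y = C^T (C C^T)^{-1} C is an idempotent that fixes the row space of C, and
   X = C^T N C is symmetric positive semidefinite with X Y = X.  Every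
   eigenvector of X or of X + Y for a nonzero eigenvalue lies in the fixed
   space of Y, on which X + Y acts as X + 1.  Hence, if T is the set of
   eigenvalues of X on that (nonzero) space, lambda_max X = sup T,
   lambda_max (X + Y) = sup T + 1 and lambda_max Y = 1; the eigenvalue 0 of
   X and of X + Y does not affect the suprema because T contains a
   nonnegative number. *)

Section PsdMatrices.
Variable R : realFieldType.

Definition psdmx n (A : 'M[R]_n) := forall v : 'rV_n, 0 <= (v *m A *m v^T) 0 0.

Lemma mulmx_tr_ge0 n (v : 'rV[R]_n) : 0 <= (v *m v^T) 0 0.
Proof. by rewrite mxE; apply: sumr_ge0 => j _; rewrite mxE -expr2 sqr_ge0. Qed.

Lemma mulmx_tr_eq0 n (v : 'rV[R]_n) : ((v *m v^T) 0 0 == 0) = (v == 0).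
Proof.
apply/idP/eqP => [|->]; last by rewrite mul0mx mxE.
rewrite mxE psumr_eq0 => [/allP v0|j _]; last by rewrite mxE -expr2 sqr_ge0.
apply/rowP => j; have /implyP := v0 j (mem_index_enum j).
by rewrite mxE -expr2 sqrf_eq0 mxE => /(_ isT)/eqP.
Qed.

Lemma psdmx_congr n p (A : 'M[R]_n) (B : 'M_(p, n)) :
  psdmx A -> psdmx (B *m A *m B^T).
Proof. by move=> A_psd v; have := A_psd (v *m B); rewrite trmx_mul !mulmxA. Qed.

Lemma psdmx_inv n (A : 'M[R]_n) : A^T = A -> psdmx A -> psdmx (invmx A).
Proof.
move=> A_sym A_psd; have [A_unit|] := boolP (A \in unitmx); last first.
  by move/invmx_out->.
have := psdmx_congr (invmx A) A_psd.
by rewrite trmx_inv A_sym mulVmx // mul1mx.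
Qed.

Lemma psdmx_diag n (d : 'rV[R]_n) : (forall i, 0 <= d 0 i) -> psdmx (diag_mx d).
Proof.
move=> d_ge0 v; rewrite mul_mx_diag mxE; apply: sumr_ge0 => j _.
by rewrite !mxE mulrAC -expr2 mulr_ge0 ?sqr_ge0.
Qed.

Lemma psdmx_eigenvalue_ge0 n (A : 'M[R]_n) a : psdmx A -> eigenvalue A a -> 0 <= a.
Proof.
move=> A_psd /eigenvalueP[v vA v_neq0]; have := A_psd v.
rewrite vA -scalemxAl mxE pmulr_lge0 // lt_def mulmx_tr_eq0 v_neq0.
exact: mulmx_tr_ge0.
Qed.

End PsdMatrices.

Section RowProjector.
Variables (R : realFieldType) (m n : nat) (C : 'M[R]_(m, n)).

Definition row_proj := C^T *m invmx (C *m C^T) *m C.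

Hypothesis C_free : row_free C.

Lemma gram_unitmx : C *m C^T \in unitmx.
Proof.
rewrite -row_free_unit; apply: inj_row_free => u uG0.
apply/eqP; rewrite -(mulmx_free_eq0 _ C_free) -mulmx_tr_eq0.
by rewrite trmx_mul mulmxA -(mulmxA u) uG0 mul0mx mxE.
Qed.

Lemma mulmx_row_proj : C *m row_proj = C.
Proof. by rewrite /row_proj !mulmxA mulmxV ?gram_unitmx ?mul1mx. Qed.

Lemma row_proj_idem : row_proj *m row_proj = row_proj.
Proof. by rewrite {1}/row_proj -!mulmxA mulmx_row_proj !mulmxA. Qed.

Lemma row_proj_fixed : (0 < m)%N -> exists2 v : 'rV_n, v != 0 & v *m row_proj = v.
Proof.
move=> m_gt0; exists (const_mx 1 *m C); last by rewrite -mulmxA mulmx_row_proj.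
rewrite (mulmx_free_eq0 _ C_free); apply/eqP => /matrixP/(_ 0 (Ordinal m_gt0)).
by rewrite !mxE; apply/eqP; exact: oner_neq0.
Qed.

End RowProjector.

Local Open Scope classical_set_scope.

Lemma eigenvalue_ubound (R : realFieldType) n (A : 'M[R]_n) :
  has_ubound [set a : R | eigenvalue A a].
Proof.
have charA_neq0 : char_poly A != 0 by apply/monic_neq0/char_poly_monic.
exists (cauchy_bound (char_poly A)) => a /=.
rewrite eigenvalue_root_char => /eqP/(cauchy_boundP charA_neq0)/ltW.
exact: le_trans (ler_norm a).
Qed.

Lemma eigenvalue_idem (F : fieldType) n (P : 'M[F]_n) a :
  P *m P = P -> eigenvalue P a -> a = 0 \/ a = 1.
Proof.
move=> PP /eigenvalueP[v vP v_neq0].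
have : (a * a) *: v = a *: v by rewrite -scalerA -vP scalemxAl -vP -mulmxA PP.
move/eqP; rewrite -subr_eq0 -scalerBl scaler_eq0 (negbTE v_neq0) orbF.
by rewrite -{3}[a]mulr1 -mulrBr mulf_eq0 subr_eq0 => /orP[]/eqP; [left|right].
Qed.

Lemma eigenvalue_diag_conj (F : fieldType) n (U : 'M[F]_n) (d : 'rV_n) i :
  U \in unitmx -> eigenvalue (invmx U *m diag_mx d *m U) (d 0 i).
Proof.
move=> U_unit; apply/eigenvalueP; exists (delta_mx 0 i *m U).
  by rewrite !mulmxA mulmxK // -rowE row_diag_mx scalemxAl.
rewrite mulmx_free_eq0 ?row_free_unit //; apply/eqP => /matrixP/(_ 0 i).
by rewrite !mxE !eqxx; apply/eqP; exact: oner_neq0.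
Qed.

Lemma sym_eigenvalue_neq0 (R : rcfType) n (A : 'M[R]_n) :
  A^T = A -> A != 0 -> exists2 a, a != 0 & eigenvalue A a.
Proof.
move=> A_sym A_neq0; pose AC := map_mx (real_complex R) A.
have AC_herm : AC \is hermsymmx.
  apply: realsym_hermsym.
    by apply/is_hermitianmxP; rewrite expr0 scale1r map_mx_id // /AC map_trmx A_sym.
  by apply/mxOverP => i j; rewrite mxE; apply/complex_realP; exists (A i j).
have /hermitian_normalmx/orthomx_spectralP AC_diag := AC_herm.
have /mxOverP d_real := hermitian_spectral_diag_real AC_herm.
set d := spectral_diag AC in AC_diag d_real.
have [i di_neq0] : exists i, d 0 i != 0.
  apply/existsP; apply: contraNT A_neq0; rewrite negb_exists => /forallP d0.
  have d_eq0 : d = 0.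
    by apply/rowP => j; rewrite mxE; apply/eqP; rewrite -[_ == _]negbK d0.
  by rewrite -(map_mx_eq0 (real_complex R)) -/AC AC_diag d_eq0 linear0 mulmx0 mul0mx.
have Re_di := RRe_real (d_real 0 i).
exists (complex.Re (d 0 i)); first by apply: contraNneq di_neq0; rewrite -Re_di => ->.
rewrite -(eigenvalue_map (real_complex R)) /= Re_di -/AC AC_diag.
exact/eigenvalue_diag_conj/spectral_unit.
Qed.

Lemma sup_eq_down (R : realType) (A B : set R) :
  A `<=` down B -> B `<=` down A -> sup A = sup B.
Proof.
move=> AB BA; rewrite -sup_down -[RHS]sup_down; congr sup.
apply/seteqP; split => x /downP[y + xy] => [/AB|/BA] /downP[z zB yz].
  by apply/downP; exists z; last exact: le_trans xy yz.
by apply/downP; exists z; last exact: le_trans xy yz.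
Qed.

Lemma lambda_max_idem (R : realType) n (P : 'M[R]_n) :
  P *m P = P -> (exists2 v : 'rV_n, v != 0 & v *m P = v) -> lambda_max P = 1.
Proof.
move=> PP [v v_neq0 vP]; rewrite -[RHS]sup1; apply: sup_eq_down => a.
  move=> /(eigenvalue_idem PP) a01; apply/downP; exists 1 => //.
  by case: a01 => ->; rewrite ?ler01.
by move=> ->; apply/le_down/eigenvalueP; exists v; rewrite ?scale1r.
Qed.

Section FixedSpaceEigenvalues.
Variables (R : realType) (n : nat) (X P : 'M[R]_n).
Hypotheses (X_sym : X^T = X) (X_psd : psdmx X).
Hypotheses (PP : P *m P = P) (XP : X *m P = X).
Hypothesis P_fixed : exists2 v : 'rV_n, v != 0 & v *m P = v.

Let fix_eig := [set a : R | exists2 v : 'rV_n, v != 0 & v *m P = v /\ v *m X = a *: v].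

Let fix_eig_eigenvalue a : fix_eig a -> eigenvalue X a.
Proof. by move=> [v v_neq0 [_ vX]]; apply/eigenvalueP; exists v. Qed.

Let fix_eig_eigenvalue_addP a : fix_eig a -> eigenvalue (X + P) (a + 1).
Proof.
move=> [v v_neq0 [vP vX]]; apply/eigenvalueP; exists v => //.
by rewrite mulmxDr vP vX scalerDl scale1r.
Qed.

Let eigenvalue_fix_eig a : a != 0 -> eigenvalue X a -> fix_eig a.
Proof.
move=> a_neq0 /eigenvalueP[v vX v_neq0]; exists v => //; split => //.
by apply: (scalerI a_neq0); rewrite scalemxAl -vX -mulmxA XP.
Qed.

Let eigenvalue_addP_fix_eig a : a != 0 -> eigenvalue (X + P) a -> fix_eig (a - 1).
Proof.
move=> a_neq0 /eigenvalueP[v vXP v_neq0].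
have vP : v *m P = v.
  by apply: (scalerI a_neq0); rewrite scalemxAl -vXP -mulmxA mulmxDl XP PP.
exists v => //; split => //.
by rewrite scalerBl scale1r -vXP mulmxDr vP addrK.
Qed.

Let fix_eig_nonneg : exists2 t, fix_eig t & 0 <= t.
Proof.
have [X0|X_neq0] := eqVneq X 0.
  have [v v_neq0 vP] := P_fixed; exists 0 => //; exists v => //.
  by rewrite X0 mulmx0 scale0r.
have [a a_neq0 Xa] := sym_eigenvalue_neq0 X_sym X_neq0.
by exists a; [exact: eigenvalue_fix_eig | exact: psdmx_eigenvalue_ge0 Xa].
Qed.

Let has_sup_fix_eig : has_sup fix_eig.
Proof.
have [t Tt _] := fix_eig_nonneg; split; first by exists t.
have [b b_ub] := eigenvalue_ubound X.
by exists b => a /fix_eig_eigenvalue; exact: b_ub.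
Qed.

Let lambda_max_fix_eig : lambda_max X = sup fix_eig.
Proof.
have [t Tt t_ge0] := fix_eig_nonneg.
apply: sup_eq_down => a; last by move=> Ta; apply: le_down; exact: fix_eig_eigenvalue.
move=> /= Xa; apply/downP; have [a0|a_neq0] := eqVneq a 0; first by exists t; rewrite ?a0.
by exists a => //; exact: eigenvalue_fix_eig.
Qed.

Let lambda_max_addP_fix_eig : lambda_max (X + P) = sup fix_eig + 1.
Proof.
have [t Tt t_ge0] := fix_eig_nonneg.
have has_sup1 : has_sup [set (1 : R)] by split; exists 1 => // x ->.
rewrite -[1 in RHS]sup1 -sup_sumE //; apply: sup_eq_down => a.
  move=> /= XPa; apply/downP; have [a0|a_neq0] := eqVneq a 0.
    exists (t + 1); first by exists t => //; exists 1.
    by rewrite a0 addr_ge0.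
  exists a => //; exists (a - 1); first exact: eigenvalue_addP_fix_eig.
  by exists 1 => //; rewrite subrK.
by move=> [b Tb [_ -> <-]]; apply: le_down; exact: fix_eig_eigenvalue_addP.
Qed.

Lemma lambda_max_add_idem : lambda_max (X + P) = lambda_max X + lambda_max P.
Proof. by rewrite lambda_max_addP_fix_eig lambda_max_fix_eig lambda_max_idem. Qed.

End FixedSpaceEigenvalues.

Section IncidenceGram.
Variables (R : realType) (k c : nat) (src dst : 'I_(k + c) -> 'I_k.+1).
Variables (w : 'rV[R]_(k + c)) (eps : 'rV[R]_k.+1).
Hypotheses (w_gt0 : forall l, 0 < w 0 l) (eps_gt0 : forall i, 0 < eps 0 i).

Lemma Les_sym : (Les src dst eps)^T = Les src dst eps.
Proof. by rewrite /Les !trmx_mul trmxK trmx_inv tr_diag_mx !mulmxA. Qed.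

Lemma Les_psd : psdmx (Les src dst eps).
Proof.
have E_psd : psdmx (diag_mx eps) by apply: psdmx_diag => i; exact: ltW.
have := psdmx_congr (Dtau R src dst)^T (psdmx_inv (tr_diag_mx eps) E_psd).
by rewrite trmxK.
Qed.

Lemma Rmat_free : row_free (Rmat R src dst).
Proof.
apply: inj_row_free => u; rewrite mul_mx_row mulmx1 -row_mx0.
by case/eq_row_mx.
Qed.

Lemma Whalf_unit : Whalf w \in unitmx.
Proof.
rewrite unitmxE det_diag unitfE; apply/prodf_neq0 => l _.
by rewrite mxE sqrtr_eq0 -ltNge.
Qed.

Lemma Whalf_sqr : Whalf w *m Whalf w = diag_mx w.
Proof.
rewrite mulmx_diag; congr diag_mx; apply/rowP => l.
by rewrite !mxE -expr2 sqr_sqrtr // ltW.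
Qed.

Let C := Rmat R src dst *m Whalf w.

Lemma Rmat_Whalf_free : row_free C.
Proof.
by rewrite /row_free mxrankMfree ?row_free_unit ?Whalf_unit //; exact: Rmat_free.
Qed.

Lemma Rmat_Whalf_gram :
  C *m C^T = Rmat R src dst *m diag_mx w *m (Rmat R src dst)^T.
Proof.
by rewrite /C trmx_mul tr_diag_mx !mulmxA -(mulmxA _ _ (Whalf w)) Whalf_sqr.
Qed.

Lemma Xmat_gram :
  Xmat src dst w eps = C^T *m invmx (C *m C^T *m Les src dst eps *m (C *m C^T)) *m C.
Proof. by rewrite /Xmat /= -Rmat_Whalf_gram trmx_mul tr_diag_mx !mulmxA. Qed.

Lemma Ymat_row_proj : Ymat src dst w = row_proj C.
Proof. by rewrite /Ymat /row_proj /= -Rmat_Whalf_gram trmx_mul tr_diag_mx !mulmxA. Qed.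

End IncidenceGram.

Theorem lemma7 (R : realType) (k c : nat)
  (src dst : 'I_(k + c) -> 'I_k.+1)
  (w : 'rV[R]_(k + c)) (eps : 'rV[R]_k.+1) :
  (0 < k)%N ->
  no_self_loops src dst ->
  no_parallel_edges src dst ->
  first_edges_spanning_tree src dst ->
  (forall l, 0 < w 0 l) ->
  (forall i, 0 < eps 0 i) ->
  lambda_max (Xmat src dst w eps + Ymat src dst w) =
  lambda_max (Xmat src dst w eps) + lambda_max (Ymat src dst w).
Proof.
move=> k_gt0 _ _ _ w_gt0 eps_gt0.
rewrite Xmat_gram // Ymat_row_proj //.
have C_free := Rmat_Whalf_free src dst w_gt0.
set C := _ *m Whalf w in C_free *; set G := C *m C^T; set L := Les src dst eps.
have G_sym : G^T = G by rewrite trmx_mul trmxK.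
have GLG_sym : (G *m L *m G)^T = G *m L *m G.
  by rewrite trmx_mul (trmx_mul G) G_sym Les_sym mulmxA.
have N_psd : psdmx (invmx (G *m L *m G)).
  apply: psdmx_inv GLG_sym _.
  by have := psdmx_congr G (Les_psd src dst eps_gt0); rewrite G_sym.
apply: lambda_max_add_idem.
- by rewrite trmx_mul (trmx_mul C^T) trmxK trmx_inv GLG_sym mulmxA.
- by have := psdmx_congr C^T N_psd; rewrite trmxK.
- exact: row_proj_idem.
- by rewrite -mulmxA mulmx_row_proj.
- exact: row_proj_fixed.
Qed.
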